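(* Let $a^\circ_{n,k}(1423)$ be the number of cyclic permutations $\pi\in\mathfrak S_n$ whose one-line notation avoids $\delta_k=k(k-1)\cdots21$ and such that every cyclic rotation of the cycle form $C(\pi)$ avoids $1423$. Then for $n\ge3$, $a^\circ_{n,3}(1423)=2^{n-2}$, and for $k\ge4$, $a^\circ_{n,k}(1423)=F_{2n-3}$, where $F_m$ is the $m$th Fibonacci number ($F_1=F_2=1$).
   Context: A permutation $\pi\in\mathfrak S_n$ is cyclic if it consists of a single $n$-cycle. For cyclic $\pi$, $C(\pi)=(1,c_2,\dots,c_n)$ with $c_2=\pi(1)$, $c_{i+1}=\pi(c_i)$; its cyclic rotations are the sequences $c_ic_{i+1}\cdots c_nc_1\cdots c_{i-1}$ (with $c_1=1$). A sequence avoids a pattern $\sigma\in\mathfrak S_m$ if no subsequence of length $m$ is in the same relative order as $\sigma$. The one-line notation of $\pi$ is $\pi_1\cdots\pi_n$, $\pi_i=\pi(i)$. *)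

From mathcomp Require Import all_boot all_fingroup.
Set Implicit Arguments. Unset Strict Implicit. Unset Printing Implicit Defensive.

Definition same_order (t sg : seq nat) : bool :=
  (size t == size sg) &&
  all (fun i => all (fun j =>
        (nth 0 t i < nth 0 t j) == (nth 0 sg i < nth 0 sg j))
       (iota 0 (size sg))) (iota 0 (size sg)).

Definition avoids (s sg : seq nat) : bool :=
  [forall m : (size s).-tuple bool, ~~ same_order (mask m s) sg].

(* Permutations of {1,...,n} are represented by 'S_n acting on {0,...,n-1};
   value i of 'I_n stands for i+1. *)
Definition one_line n (p : 'S_n) : seq nat := [seq (p i).+1 | i <- enum 'I_n].

Definition is_cyclic n (p : 'S_n) : bool := #|porbits p| == 1.

Definition cycle_form n : 'S_n -> seq nat :=
  match n with
  | 0 => fun _ => [::]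
  | m.+1 => fun p => [seq (((p ^+ j)%g : 'S_m.+1) ord0).+1 | j <- iota 0 m.+1]
  end.

Definition rotations_avoid n (p : 'S_n) (sg : seq nat) : bool :=
  [forall i : 'I_n, avoids (rot i (cycle_form p)) sg].

Definition delta (k : nat) : seq nat := rev (iota 1 k).

Definition pat1423 : seq nat := [:: 1; 4; 2; 3].

Definition a_circ (n k : nat) : nat :=
  #|[set p : 'S_n | [&& is_cyclic p, avoids (one_line p) (delta k)
                      & rotations_avoid p pat1423]]|.

Fixpoint fib (m : nat) : nat :=
  match m with
  | 0 => 0
  | 1 => 1
  | (m'.+1 as m1).+1 => fib m1 + fib m'
  end.

(** Write the cycle of a cyclic permutation of {1, ..., n+1} from its largest
    letter, as (n+1) w.  All rotations of the cycle avoid 1423 exactly when w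
    avoids 231 and 1423, and such words are built recursively: the largest
    letter comes first, or it follows such a word on the j smallest letters and
    precedes all the remaining letters in decreasing order.  Hence there are
    F_{2n-1} of them, by F_{2k+1} = F_{2k-1} + (F_1 + F_3 + ... + F_{2k-1}).

    A decreasing subsequence of length k in the one-line notation is a chain of
    k pairwise inverted points (x, pi x) of the graph, and these points are the
    arcs (c, c') joining consecutive letters of the cycle.  Following the
    recursion, a chain never has four arcs, so for k >= 4 every word counts; a
    chain of three arcs appears as soon as the decreasing tail is non-empty,
    and is otherwise inherited from the shorter word, so the number of words
    avoiding 321 doubles at each step, giving 2^{n-1}. *)

From mathcomp Require Import all_boot all_fingroup zify.
Set Implicit Arguments. Unset Strict Implicit. Unset Printing Implicit Defensive.

Lemma avoidsP s sg : reflect (forall t, subseq t s -> ~~ same_order t sg) (avoids s sg).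
Proof.
apply: (iffP forallP) => [A t /subseqP[m Hm ->] | A m]; last exact/A/mask_subseq.
by have /eqP Hm' := Hm; apply: (A (Tuple Hm')).
Qed.

Lemma size_same_order t sg : same_order t sg -> size t = size sg.
Proof. by case/andP => /eqP. Qed.

Lemma same_order_1423 a b c d :
  same_order [:: a; b; c; d] pat1423 = [&& a < c, c < d & d < b].
Proof. by rewrite /same_order /= !ltnn /= !eqbF_neg !eqb_id -!leqNgt; apply/idP/idP; lia. Qed.

Lemma size_delta k : size (delta k) = k.
Proof. by rewrite size_rev size_iota. Qed.

Lemma nth_delta k i : i < k -> nth 0 (delta k) i = k - i.
Proof. by move=> ik; rewrite nth_rev ?size_iota // nth_iota; lia. Qed.

Lemma gtn_trans : transitive gtn.
Proof. by move=> y x z /= xy yz; apply: ltn_trans xy. Qed.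

Lemma same_order_delta t k : same_order t (delta k) = (size t == k) && sorted gtn t.
Proof.
rewrite /same_order size_delta; case: eqP => [tk | //] /=.
have iota_mem i : i < k -> i \in iota 0 k by rewrite mem_iota.
apply/allP/idP => [H | St i].
  apply/(sortedP 0) => i; rewrite tk => ik.
  have /allP/(_ i (iota_mem _ (ltnW ik)))/eqP := H i.+1 (iota_mem _ ik).
  rewrite !nth_delta ?(ltnW ik) //= => ->; lia.
move=> /[!mem_iota] /= ik; apply/allP => j /[!mem_iota] /= jk; rewrite !nth_delta //.
have ltS := sorted_ltn_nth gtn_trans 0 St; rewrite tk in ltS.
case: (ltngtP i j) => [ij | ji | ->]; last by rewrite !ltnn.
- by have /= := ltS i j ik jk ij => ?; apply/eqP; lia.
- by have /= := ltS j i jk ik ji => ?; apply/eqP; lia.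
Qed.

Lemma avoids_delta s k :
  avoids s (delta k) <-> ~ exists t, [/\ subseq t s, size t = k & sorted gtn t].
Proof.
split=> [/avoidsP A [t [St tk Dt]] | N].
  by have := A t St; rewrite same_order_delta tk eqxx Dt.
apply/avoidsP => t St; rewrite same_order_delta.
by apply/negP => /andP[/eqP tk Dt]; apply: N; exists t.
Qed.

Definition has231 (s : seq nat) := exists a b c, subseq [:: a; b; c] s /\ c < a < b.

Definition has1423 (s : seq nat) :=
  exists a b c d, subseq [:: a; b; c; d] s /\ [&& a < c, c < d & d < b].

Lemma has231_subseq s t : subseq s t -> has231 s -> has231 t.
Proof. by move=> st [a [b [c [S H]]]]; exists a, b, c; split=> //; apply: subseq_trans S st. Qed.

Lemma has1423_subseq s t : subseq s t -> has1423 s -> has1423 t.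
Proof.
by move=> st [a [b [c [d [S H]]]]]; exists a, b, c, d; split=> //; apply: subseq_trans S st.
Qed.

Lemma avoids_1423 s : avoids s pat1423 <-> ~ has1423 s.
Proof.
split=> [/avoidsP A [a [b [c [d [S H]]]]] | N]; first by have := A _ S; rewrite same_order_1423 H.
apply/avoidsP => t St; apply/negP => So; have := size_same_order So.
case: t St So => [|a [|b [|c [|d [|]]]]] // St; rewrite same_order_1423 => H _.
by apply: N; exists a, b, c, d.
Qed.

(** * Rotations of a word starting with its largest letter *)

Lemma subseq_cons_max m x u r : all (fun y => y < m) r ->
  subseq (x :: u) (m :: r) -> has (fun y => x < y) u -> subseq (x :: u) r.
Proof.
move=> /allP rm /=; case: eqP => // -> /mem_subseq ur /hasP[y /ur /rm ym my].
by have := ltn_trans my ym; rewrite ltnn.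
Qed.

Lemma subseq_cat_split (T : eqType) (t X Y : seq T) :
  subseq t (X ++ Y) -> exists t1 t2, [/\ t = t1 ++ t2, subseq t1 X & subseq t2 Y].
Proof.
move=> /subseqP[m sm ->]; exists (mask (take (size X) m) X), (mask (drop (size X) m) Y).
rewrite !mask_subseq -mask_cat ?cat_take_drop // size_take sm size_cat.
by case: ltnP => //; lia.
Qed.

Lemma subseq_cat_take_drop (T : eqType) (t1 t2 s : seq T) :
  subseq (t1 ++ t2) s -> exists i, subseq t1 (take i s) /\ subseq t2 (drop i s).
Proof.
elim: s t1 => [|x s IH] t1.
  by case: t1 => //; case: t2 => // _; exists 0.
case: t1 => [|a t1] /=; first by exists 0; rewrite take0 drop0 sub0seq.
case: eqP => [-> | ne] H.
  by have [i [S1 S2]] := IH t1 H; exists i.+1; rewrite /= eqxx.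
have [i [S1 S2]] := IH (a :: t1) H; exists i.+1; rewrite /=.
by case: eqP.
Qed.

Lemma subseq_rot (T : eqType) (t s : seq T) i :
  subseq t (rot i s) -> exists2 j, j <= size t & subseq (rot j t) s.
Proof.
move=> /subseq_cat_split[t1 [t2 [-> S1 S2]]]; exists (size t1); first by rewrite size_cat leq_addr.
by rewrite rot_size_cat -(cat_take_drop i s) cat_subseq.
Qed.

Lemma rot_rot (T : Type) (c : seq T) i j : exists k, rot i (rot j c) = rot k c.
Proof.
have [jc | cj] := leqP j (size c); last by exists i; rewrite (rot_oversize (ltnW cj)).
have [ic | ci] := leqP i (size c); last by exists j; rewrite rot_oversize // size_rot ltnW.
by rewrite rot_add_mod //; eexists.
Qed.

Lemma all_rot_rot (T : Type) (P : seq T -> Prop) c j :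
  (forall i, P (rot i (rot j c))) <-> (forall i, P (rot i c)).
Proof.
split=> H i; last by have [k ->] := rot_rot c i j.
have [k E] := rot_rot (rot j c) i (size c - j).
by rewrite -[c in rot i c](rotK j) /rotr size_rot E.
Qed.

Lemma rot_cons_max_has1423 n w i : all (fun x => x < n) w ->
  has1423 (rot i (n :: w)) -> has231 w \/ has1423 w.
Proof.
move=> wn [a [b [c [d [/subseq_rot[j jt S] /and3P[ac cd db]]]]]].
have head1423 : subseq [:: a; b; c; d] (n :: w) -> has1423 w.
  move=> S'; exists a, b, c, d; rewrite ac cd db; split=> //.
  by apply: subseq_cons_max wn S' _; rewrite /= ac orbT.
(* The rotations 4231, 2314 and 3142 of 1423 all contain 231. *)
case: j jt S => [|[|[|[|[|j]]]]] //= _ S; try by right; apply: head1423.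
- left; exists c, d, a; split; last lia.
  by move: S => /=; case: eqP => [_ | _ /(subseq_trans (subseq_cons _ _))] // /cons_subseq.
- left; exists c, d, a; split; last lia.
  have {}S := subseq_cons_max wn S (ltac:(by rewrite /= cd)).
  exact: subseq_trans (prefix_subseq [:: c; d; a] [:: b]) S.
- left; exists d, b, c; split; last lia.
  have {}S := subseq_cons_max wn S (ltac:(by rewrite /= db orbT)).
  exact: subseq_trans (mask_subseq [:: true; false; true; true] _) S.
Qed.

Lemma has231_rot_cons_max n w : all (fun x => x < n) w ->
  has231 w -> exists i, has1423 (rot i (n :: w)).
Proof.
move=> /allP wn [a [b [c [S /andP[ca ab]]]]].
have [i [S1 S2]] : exists i,
    subseq [:: n; a; b] (take i (n :: w)) /\ subseq [:: c] (drop i (n :: w)).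
  by apply: subseq_cat_take_drop; rewrite /= eqxx.
exists i, c, n, a, b; split; last by rewrite ca ab wn // (mem_subseq S) // !inE eqxx orbT.
by rewrite -cat1s (cat_subseq S2 S1).
Qed.

Lemma rot_cons_max_avoid1423 n w : all (fun x => x < n) w ->
  (forall i, ~ has1423 (rot i (n :: w))) <-> ~ has231 w /\ ~ has1423 w.
Proof.
move=> wn; split=> [N | [N1 N2] i /(rot_cons_max_has1423 wn)[] //].
split=> [/(has231_rot_cons_max wn)[i] | H]; first exact: N.
by apply: (N 0); rewrite rot0; apply: has1423_subseq H; apply: subseq_cons.
Qed.

(** * Words avoiding 231 and 1423 *)

Lemma iotaSr m n : iota m n.+1 = rcons (iota m n) (m + n).
Proof. by rewrite -addn1 iotaD cats1. Qed.

Definition down b c := rev (iota b c).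

Lemma sorted_down b c : sorted gtn (down b c).
Proof. by rewrite rev_sorted (eq_sorted (e' := ltn)) ?iota_ltn_sorted. Qed.

Lemma mem_down b c x : (x \in down b c) = (b <= x < b + c).
Proof. by rewrite mem_rev mem_iota. Qed.

Lemma down_cons b c d : d = b + c -> d :: down b c = down b c.+1.
Proof. by move->; rewrite /down iotaSr rev_rcons. Qed.

Lemma has231_cat_down L M : sorted gtn M -> {in L & M, forall x y, x < y} ->
  has231 (L ++ M) -> has231 L.
Proof.
move=> SM LM [x [y [z [/subseq_cat_split[t1 [t2 [E S1 S2]]] /andP[zx xy]]]]].
have St2 := subseq_sorted gtn_trans S2 SM.
have lt u v : u \in t1 -> v \in t2 -> u < v.
  by move=> /(mem_subseq S1) + /(mem_subseq S2); apply: LM.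
case: t1 E S1 lt => [|x1 [|x2 [|x3 [|x4 t1]]]] //= E; rewrite -?E in St2.
- by move: St2 => /= /and3P[]; lia.
- by case: E => <- <- _ /(_ x z); rewrite !inE !eqxx orbT => /(_ isT isT); lia.
- by case: E => <- <- <- _ /(_ x z); rewrite !inE !eqxx ?orbT => /(_ isT isT); lia.
- by case: E => <- <- <- <- S1 _; exists x, y, z; rewrite zx xy.
Qed.

Lemma has1423_cat_down L M : sorted gtn M -> {in L & M, forall x y, x < y} ->
  has1423 (L ++ M) -> has1423 L.
Proof.
move=> SM LM [x [y [z [u [/subseq_cat_split[t1 [t2 [E S1 S2]]] /and3P[xz zu uy]]]]]].
have St2 := subseq_sorted gtn_trans S2 SM.
have lt v v' : v \in t1 -> v' \in t2 -> v < v'.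
  by move=> /(mem_subseq S1) + /(mem_subseq S2); apply: LM.
case: t1 E S1 lt => [|x1 [|x2 [|x3 [|x4 [|x5 t1]]]]] //= E; rewrite -?E in St2.
- by move: St2 => /= /and4P[]; lia.
- by case: E => <- E; rewrite -E /= in St2; move: St2 => /and3P[]; lia.
- by case: E => <- <- E; rewrite -E /= in St2; move: St2 => /andP[]; lia.
- by case: E => <- <- <- <- _ /(_ y u); rewrite !inE !eqxx ?orbT => /(_ isT isT); lia.
- by case: E => <- <- <- <- <- S1 _; exists x, y, z, u; rewrite xz zu uy.
Qed.

Lemma has231_cons_max m r : all (fun x => x < m) r -> has231 (m :: r) -> has231 r.
Proof.
move=> rm [x [y [z [S /andP[zx xy]]]]]; exists x, y, z; rewrite zx xy; split=> //.
by apply: subseq_cons_max rm S _; rewrite /= xy.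
Qed.

Lemma has1423_cons_max m r : all (fun x => x < m) r -> has1423 (m :: r) -> has1423 r.
Proof.
move=> rm [x [y [z [u [S /and3P[xz zu uy]]]]]]; exists x, y, z, u; rewrite xz zu uy.
by split=> //; apply: subseq_cons_max rm S _; rewrite /= (ltn_trans xz (ltn_trans zu uy)).
Qed.

Lemma perm_iota_cat_lt L R a k : perm_eq (L ++ R) (iota a k) ->
  {in L & R, forall x y, x < y} -> perm_eq L (iota a (size L)).
Proof.
move=> P LR.
have sortLR : sort leq L ++ sort leq R = iota a k.
  apply: (sorted_eq leq_trans anti_leq); last 1 first.
  - by apply: perm_trans P; apply: perm_cat; rewrite perm_sort.
  - rewrite (sorted_pairwise leq_trans) pairwise_cat -!(sorted_pairwise leq_trans).
    rewrite !(sort_sorted leq_total) !andbT.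
    by apply/allrelP => x y; rewrite !mem_sort => xL yR; apply/ltnW/LR.
  - exact: iota_sorted.
have Lk : size L <= k by have := perm_size P; rewrite size_cat size_iota; lia.
have := congr1 (take (size L)) sortLR; rewrite take_size_cat ?size_sort // take_iota.
by rewrite (minn_idPl Lk) => <-; rewrite perm_sym perm_sort.
Qed.

Lemma lt_of_no231_max L m R : uniq (L ++ m :: R) -> all (fun x => x < m) L ->
  ~ has231 (L ++ m :: R) -> {in L & R, forall x y, x < y}.
Proof.
move=> U /allP Lm N x y xL yR; rewrite ltn_neqAle; apply/andP; split.
  move: U; rewrite cat_uniq => /and3P[_ /hasPn/(_ y) + _].
  by rewrite inE yR orbT => /(_ isT); apply: contraNneq => <-.
rewrite leqNgt; apply/negP => yx; apply: N; exists x, m, y; rewrite yx Lm //; split=> //.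
by rewrite -cat1s -(cat1s m) cat_subseq ?sub1seq // /= eqxx sub1seq.
Qed.

Lemma sorted_gtn_no_ascent R : uniq R ->
  (forall x y, subseq [:: x; y] R -> ~ x < y) -> sorted gtn R.
Proof.
elim: R => // x [|y R] IH //= /andP[xR uR] H.
apply/andP; split.
  have := H x y; rewrite /= !eqxx sub0seq => /(_ isT).
  by move: xR; rewrite inE negb_or => /andP[/eqP]; lia.
apply: IH => // u v S; apply: H; case: ifP => _ //; exact: subseq_trans (subseq_cons _ _) S.
Qed.

Lemma avoider_split a k L R : perm_eq (L ++ a + k :: R) (iota a k.+1) ->
  ~ has231 (L ++ a + k :: R) -> ~ has1423 (L ++ a + k :: R) ->
  [/\ perm_eq L (iota a (size L)), perm_eq R (iota (a + size L) (k - size L))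
     & L != [::] -> R = down (a + size L) (k - size L)].
Proof.
move=> P N1 N2.
have PLR : perm_eq (L ++ R) (iota a k).
  rewrite -(perm_cons (a + k)); apply: perm_trans (perm_trans _ P) _.
    by rewrite -cat1s perm_catCA.
  by rewrite iotaSr -cats1 perm_catC.
have Lm : all (fun x => x < a + k) L.
  by apply/allP => x xL; move: (perm_mem PLR x); rewrite mem_cat xL mem_iota => /esym/andP[].
have LR := lt_of_no231_max (etrans (perm_uniq P) (iota_uniq _ _)) Lm N1.
have PL := perm_iota_cat_lt PLR LR.
have jk : size L <= k by rewrite -(size_iota a k) -(perm_size PLR) size_cat leq_addr.
have PR : perm_eq R (iota (a + size L) (k - size L)).
  rewrite -(perm_cat2l L); apply: perm_trans PLR _.
  by rewrite -{1}(subnKC jk) iotaD perm_cat2r perm_sym.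
split=> // L0; have lL : nth 0 L 0 \in L by rewrite mem_nth // lt0n size_eq0.
have SR : sorted gtn R.
  apply: sorted_gtn_no_ascent => [|x y S xy]; first by rewrite (perm_uniq PR) iota_uniq.
  have xR := mem_subseq S (mem_head _ _).
  have yR : y \in R by apply: (mem_subseq S); rewrite !inE eqxx orbT.
  apply: N2; exists (nth 0 L 0), (a + k), x, y; split.
    by rewrite -cat1s -[[:: a + k; x; y]]cat1s cat_subseq ?sub1seq //= eqxx.
  rewrite (LR _ x lL xR) xy /=.
  by move: (perm_mem PR y); rewrite yR mem_iota => /esym/andP[_]; lia.
apply: (sorted_eq gtn_trans) SR (sorted_down _ _) _; first by move=> x y /andP[]; lia.
by rewrite /down perm_sym perm_rev perm_sym.
Qed.

Section Enumeration.

Variable a : nat.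

(* For any fuel [f >= k], [avf f k] lists the words on [a, ..., a + k - 1]
   avoiding 231 and 1423 (lemmas av_avoid and av_complete). *)
Fixpoint avf (f k : nat) : seq (seq nat) :=
  match f, k with
  | f'.+1, k'.+1 => [seq (a + k') :: r | r <- avf f' k'] ++
      [seq l ++ (a + k') :: down (a + j) (k' - j) | j <- iota 1 k', l <- avf f' j]
  | _, _ => [:: [::]]
  end.

Definition av k := avf k k.

Lemma avf_fuel f g k : k <= f -> k <= g -> avf f k = avf g k.
Proof.
elim: f g k => [|f IH] [|g] [|k] //= kf kg.
congr (_ ++ _); first by rewrite (IH g).
congr flatten; apply/eq_in_map => j; rewrite mem_iota => /andP[j1 j2].
by rewrite (IH g) //; lia.
Qed.

Lemma av0 : av 0 = [:: [::]].
Proof. by []. Qed.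

Lemma avS k : av k.+1 = [seq (a + k) :: r | r <- av k] ++
  [seq l ++ (a + k) :: down (a + j) (k - j) | j <- iota 1 k, l <- av j].
Proof.
rewrite /av /=; congr (_ ++ _).
congr flatten; apply/eq_in_map => j; rewrite mem_iota => /andP[j1 j2].
by rewrite (avf_fuel (f := k) (g := j)) //; lia.
Qed.

Lemma avSP k w : w \in av k.+1 <->
  (exists2 r, r \in av k & w = (a + k) :: r) \/
  (exists j l, [/\ 0 < j <= k, l \in av j & w = l ++ (a + k) :: down (a + j) (k - j)]).
Proof.
rewrite avS mem_cat; split.
  case/orP => [/mapP[r rG ->] | /allpairsPdep[j [l [jI lG ->]]]]; first by left; exists r.
  by right; exists j, l; split => //; move: jI; rewrite mem_iota; lia.
case=> [[r rG ->] | [j [l [jk lG ->]]]]; apply/orP; first by left; apply/mapP; exists r.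
by right; apply/allpairsPdep; exists j, l; split => //; rewrite mem_iota; lia.
Qed.

Lemma av_ind (P : nat -> seq nat -> Prop) :
  P 0 [::] ->
  (forall k r, r \in av k -> P k r -> P k.+1 ((a + k) :: r)) ->
  (forall k j l, 0 < j <= k -> l \in av j -> P j l ->
     P k.+1 (l ++ (a + k) :: down (a + j) (k - j))) ->
  forall k w, w \in av k -> P k w.
Proof.
move=> P0 P1 P2; elim/ltn_ind => [[|k]] IH w; first by rewrite av0 inE => /eqP ->.
case/avSP => [[r rG ->] | [j [l [jk lG ->]]]]; first by apply: P1 => //; apply: IH.
by apply: P2 => //; apply: IH => //; lia.
Qed.

Lemma perm_av k w : w \in av k -> perm_eq w (iota a k).
Proof.
move: k w; apply: av_ind => // [k r _ IH | k j l jk _ IH].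
  by rewrite iotaSr -cats1 perm_sym perm_catC /= perm_cons perm_sym.
have -> : k.+1 = j + ((k - j) + 1) by lia.
rewrite iotaD iotaD -cat1s; apply: perm_cat => //.
rewrite perm_sym perm_catC /= -addnA subnKC; last lia.
by rewrite perm_cons perm_sym perm_rev.
Qed.

Lemma mem_av k w x : w \in av k -> x \in w -> a <= x < a + k.
Proof. by move=> /perm_av/perm_mem ->; rewrite mem_iota. Qed.

Lemma size_av_seq k w : w \in av k -> size w = k.
Proof. by move=> /perm_av/perm_size ->; rewrite size_iota. Qed.

Lemma av_avoid k w : w \in av k -> ~ has231 w /\ ~ has1423 w.
Proof.
move: k w; apply: av_ind => [|k r rG [N1 N2] | k j l jk lG [N1 N2]].
- by split=> [[x [y [z []]]] | [x [y [z [u []]]]]].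
- have top : all (fun x => x < a + k) r by apply/allP => x /(mem_av rG); lia.
  by split=> [/(has231_cons_max top) | /(has1423_cons_max top)].
- rewrite (down_cons (d := a + k)); last lia.
  have lt : {in l & down (a + j) (k - j).+1, forall x y, x < y}.
    by move=> x y /(mem_av lG) + /[!mem_down]; lia.
  by split=> [/(has231_cat_down (sorted_down _ _) lt) | /(has1423_cat_down (sorted_down _ _) lt)].
Qed.

Lemma av_complete k w : perm_eq w (iota a k) -> ~ has231 w -> ~ has1423 w -> w \in av k.
Proof.
elim/ltn_ind: k w => [[|k]] IH w P N1 N2; first by move/perm_size: P; case: w {N1 N2}.
have mw : a + k \in w by rewrite (perm_mem P) mem_iota; lia.
case/splitPr: mw P N1 N2 => L R P N1 N2.
have [PL PR RD] := avoider_split P N1 N2.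
have jk : size L <= k by move/perm_size: P; rewrite size_cat /= size_iota; lia.
have subL : subseq L (L ++ a + k :: R) by apply: prefix_subseq.
have subR : subseq R (L ++ a + k :: R).
  by apply: subseq_trans (suffix_subseq L _); apply: subseq_cons.
have IHsub u m :
    m < k.+1 -> subseq u (L ++ a + k :: R) -> perm_eq u (iota a m) -> u \in av m.
  by move=> mk S Pu; apply: IH mk _ Pu _ _ => [/(has231_subseq S) | /(has1423_subseq S)].
clear P N1 N2; apply/avSP; case: L => [|l L] in PL PR RD subL subR jk IHsub *.
  by left; exists R => //; rewrite addn0 subn0 in PR; apply: IHsub subR PR.
right; exists (size (l :: L)), (l :: L); rewrite -RD //; split=> //.
exact: IHsub subL PL.
Qed.

Lemma av_uniq k : uniq (av k).
Proof.
elim/ltn_ind: k => [[|k]] IH //.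
have top j l : j <= k -> l \in av j -> a + k \notin l.
  by move=> jk lj; apply/negP => /(mem_av lj); lia.
rewrite avS cat_uniq map_inj_uniq => [|x y [] //]; rewrite IH //=.
apply/andP; split.
  apply/hasPn => w /allpairsPdep[j [l [+ lj ->]]]; rewrite mem_iota => jk.
  apply/mapP => -[r _]; have := size_av_seq lj; case: l lj => [|x l] lj /=; first lia.
  by move=> _ [xk _]; have := mem_av lj (mem_head x l); lia.
apply: allpairs_uniq_dep => [|j|]; first exact: iota_uniq.
  by rewrite mem_iota => jk; apply: IH; lia.
move=> _ _ /allpairsPdep[j1 [l1 [jk1 lj1 ->]]] /allpairsPdep[j2 [l2 [jk2 lj2 ->]]] /= E.
rewrite !mem_iota in jk1 jk2.
have s1 := size_av_seq lj1; have s2 := size_av_seq lj2.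
have ej : j1 = j2.
  have := congr1 (index (a + k)) E.
  rewrite !index_cat (negbTE (top _ _ _ lj1)) ?(negbTE (top _ _ _ lj2)); try lia.
  by rewrite /= eqxx !addn0 s1 s2.
rewrite -ej in s2 *; have := congr1 (take j1) E.
by rewrite (take_size_cat _ s1) (take_size_cat _ s2) => ->.
Qed.

Lemma sumn_fib_odd k : sumn [seq fib (2 * j - 1) | j <- iota 1 k] = fib (2 * k).
Proof.
elim: k => // k IH; rewrite iotaSr map_rcons sumn_rcons IH add1n.
have -> : 2 * k.+1 - 1 = (2 * k).+1 by lia.
have -> : 2 * k.+1 = (2 * k).+2 by lia.
by rewrite addnC.
Qed.

Lemma size_av k : 0 < k -> size (av k) = fib (2 * k - 1).
Proof.
elim/ltn_ind: k => [[|[|k]]] IH // _.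
rewrite avS size_cat size_map size_allpairs_dep IH //.
have /eq_in_map -> : {in iota 1 k.+1, (fun j => size (av j)) =1 (fun j => fib (2 * j - 1))}.
  by move=> j; rewrite mem_iota => jk; apply: IH; lia.
rewrite sumn_fib_odd.
have -> : 2 * k.+2 - 1 = (2 * k).+3 by lia.
have -> : 2 * k.+1 - 1 = (2 * k).+1 by lia.
by rewrite addnC mulnS.
Qed.

End Enumeration.

(** * Chains of inversions *)

Definition inverts (u v : nat * nat) := (u.1 < v.1) && (v.2 < u.2).

Definition has_chain k (A : seq (nat * nat)) :=
  exists s, [/\ size s = k, {subset s <= A} & sorted inverts s].

Lemma inverts_irr : irreflexive inverts.
Proof. by move=> u; rewrite /inverts ltnn. Qed.

Lemma inverts_trans : transitive inverts.
Proof. by move=> v u w /andP[? ?] /andP[? ?]; apply/andP; split; lia. Qed.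

Lemma sorted_inverts s : sorted inverts s = sorted ltn (unzip1 s) && sorted gtn (unzip2 s).
Proof.
rewrite !(sorted_pairwise inverts_trans, sorted_pairwise ltn_trans, sorted_pairwise gtn_trans).
by rewrite !pairwise_map -pairwise_relI.
Qed.

Lemma has_chain_subset k A B : {subset A <= B} -> has_chain k A -> has_chain k B.
Proof. by move=> AB [s [sk sA Ss]]; exists s; split=> // x /sA/AB. Qed.

Lemma eq_has_chain k A B : A =i B -> has_chain k A <-> has_chain k B.
Proof. by move=> AB; split; apply: has_chain_subset => x; rewrite AB. Qed.

Lemma has_chain_leq j k A : j <= k -> has_chain k A -> has_chain j A.
Proof.
move=> jk [s [sk sA Ss]]; exists (take j s); split; last exact: take_sorted.
- by rewrite size_take sk; case: ltngtP jk => //; lia.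
- by move=> x /mem_take/sA.
Qed.

Lemma has_chain_size k A : has_chain k A -> k <= size A.
Proof.
move=> [s [<- sA Ss]]; apply: uniq_leq_size sA.
exact: (sorted_uniq inverts_trans inverts_irr Ss).
Qed.

Definition has_chain3b (A : seq (nat * nat)) :=
  has (fun u => has (fun v => inverts u v && has (inverts v) A) A) A.

Lemma has_chain3P A : reflect (has_chain 3 A) (has_chain3b A).
Proof.
apply: (iffP hasP) => [[u uA /hasP[v vA /andP[uv /hasP[w wA vw]]]] | [s [s3 sA Ss]]].
  exists [:: u; v; w]; split=> [|z|]; rewrite /= ?uv ?vw //.
  by rewrite !inE => /or3P[] /eqP->.
case: s s3 sA Ss => [|u [|v [|w [|]]]] //= _ sA /and3P[uv vw _].
exists u; first by apply: sA; rewrite mem_head.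
apply/hasP; exists v; first by apply: sA; rewrite !inE eqxx orbT.
by rewrite uv; apply/hasP; exists w => //; apply: sA; rewrite !inE eqxx !orbT.
Qed.

Lemma sorted_comparable (T : eqType) (r : rel T) s x y : transitive r ->
  sorted r s -> x \in s -> y \in s -> [|| x == y, r x y | r y x].
Proof.
move=> rt; rewrite (sorted_pairwise rt).
elim: s => // z s IH /= /andP[/allP zs Ps]; rewrite !inE.
case/orP=> [/eqP-> | xs] /orP[/eqP-> | ys]; rewrite ?eqxx //; last exact: IH.
  by rewrite zs ?orbT.
by rewrite zs ?orbT.
Qed.

Lemma size_sorted_colouring (T : eqType) (r : rel T) (col : T -> nat) b s :
  transitive r -> sorted r s -> {in s &, forall x y, r x y -> col x != col y} ->
  {in s, forall x, col x < b} -> size s <= b.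
Proof.
move=> rt Ss coldiff colb.
have : uniq (map col s).
  rewrite uniq_pairwise pairwise_map; apply: (sub_in_pairwise coldiff); first exact: allss.
  by rewrite -sorted_pairwise.
move=> /(uniq_leq_size (s2 := iota 0 b)); rewrite size_map size_iota; apply.
by move=> _ /mapP[x xs ->]; rewrite mem_iota colb.
Qed.

(* [e] can only end a chain, right after an element that nothing precedes. *)
Lemma has_chain_cons_top k e A :
  (forall v, v \in A -> ~~ inverts e v) ->
  (forall u v, u \in A -> v \in A -> inverts v e -> ~~ inverts u v) ->
  2 < k -> has_chain k (e :: A) -> has_chain k A.
Proof.
move=> H1 H2 k2 [s [sk sA Ss]]; exists s; split=> // x xs.
have U := sorted_uniq inverts_trans inverts_irr Ss.
have inA z : z \in s -> z != e -> z \in A.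
  by move=> /sA; rewrite inE => /orP[/eqP-> /eqP |].
suff es : e \notin s by apply: inA => //; apply: contraNneq es => <-.
apply/negP => es.
have before z : z \in rem e s -> [/\ z \in A, z \in s & inverts z e].
  rewrite mem_rem_uniq // inE => /andP[ze zs]; have zA := inA z zs ze; split=> //.
  have := sorted_comparable inverts_trans Ss zs es; rewrite (negbTE ze) /=.
  by case/orP=> // ez; move/negP: (H1 z zA).
have : 1 < size (rem e s) by rewrite size_rem //; lia.
have Ur : uniq (rem e s) := rem_uniq e U.
case E : (rem e s) Ur => [|u [|v r]] //= /andP[+ _] _; rewrite inE negb_or => /andP[uv _].
have [uA us ue] := before u (ltac:(by rewrite E mem_head)).
have [vA vs ve] := before v (ltac:(by rewrite E !inE eqxx orbT)).
have := sorted_comparable inverts_trans Ss us vs; rewrite (negbTE uv) /=.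
by case/orP=> [/(negP (H2 u v uA vA ve)) | /(negP (H2 v u vA uA ue))].
Qed.

Section ChainCat.

Variables (A1 A2 : seq (nat * nat)) (u0 v0 f : nat * nat).

Hypothesis apart : forall a, a \in A1 ->
  [\/ a = u0, a = v0 | forall b, b \in A2 -> ~~ inverts a b && ~~ inverts b a].
Hypothesis v0f_noninv : ~~ inverts v0 f && ~~ inverts f v0.

Lemma chain_cat_support (s : seq (nat * nat)) : {subset s <= A1 ++ A2} -> sorted inverts s ->
  has (mem A2) s -> {subset s <= [:: u0, v0 & A2]}.
Proof.
move=> sA Ss /hasP[c cs cA2] x xs; have {}cA2 : c \in A2 := cA2; rewrite !inE.
have := sA x xs; rewrite mem_cat => /orP[/apart[-> | -> | xA2] | ->]; rewrite ?eqxx ?orbT //.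
have := sorted_comparable inverts_trans Ss xs cs; have /andP[/negbTE-> /negbTE->] := xA2 c cA2.
by rewrite !orbF => /eqP->; rewrite cA2 !orbT.
Qed.

(* The elements of a chain meeting [A2] lie in [u0 :: v0 :: A2] and have
   pairwise distinct colours. *)
Let colour x := if x == u0 then 0 else if (x == v0) || (x == f) then 1 else 2.

Lemma colour_inverts (s : seq (nat * nat)) :
  {in A2 &, forall b b', b != f -> b' != f -> ~~ inverts b b'} ->
  {subset s <= [:: u0, v0 & A2]} -> {in s &, forall x y, inverts x y -> colour x != colour y}.
Proof.
move=> A2f sS x y xs ys xy; apply/eqP => cxy.
have col0 z : colour z = 0 -> z = u0 by rewrite /colour; case: eqP => // _; case: ifP.
have col1 z : colour z = 1 -> z = v0 \/ z = f.
  by rewrite /colour; case: eqP => // _; case: ifP => // /orP[] /eqP; [left | right].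
have col2 z : z \in s -> colour z = 2 -> z \in A2 /\ z != f.
  rewrite /colour => zs; case: eqP => // zu; case: ifP => // /norP[zv zf] _; split=> //.
  by move: (sS z zs); rewrite !inE (negbTE zv) => /orP[/eqP|].
have [nvf nfv] : ~~ inverts v0 f /\ ~~ inverts f v0 by apply/andP.
have : colour x <= 2 by rewrite /colour; case: ifP => //; case: ifP.
case cx: (colour x) cxy => [|[|[|//]]] cy _.
- by rewrite (col0 x cx) (col0 y (esym cy)) inverts_irr in xy.
- move: xy; case: (col1 x cx) (col1 y (esym cy)) => -> [] ->;
    by rewrite ?inverts_irr ?(negbTE nvf) ?(negbTE nfv).
- have [xA2 xf] := col2 x xs cx; have [yA2 yf] := col2 y ys (esym cy).
  by move/negP: (A2f x y xA2 yA2 xf yf).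
Qed.

Lemma has_chain_cat_l k :
  (forall s, {subset s <= A1 ++ A2} -> sorted inverts s -> has (mem A2) s -> size s < k) ->
  has_chain k (A1 ++ A2) -> has_chain k A1.
Proof.
move=> small [s [sk sA Ss]]; exists s; split=> // x xs.
case: (boolP (has (mem A2) s)) => [/(small s sA Ss) | /hasPn nA2]; first by rewrite sk ltnn.
by move: (sA x xs); rewrite mem_cat => /orP[// | xA2]; move/negP: (nA2 x xs).
Qed.

Lemma has_chain4_cat : {in A2 &, forall b b', b != f -> b' != f -> ~~ inverts b b'} ->
  has_chain 4 (A1 ++ A2) -> has_chain 4 A1.
Proof.
move=> A2f; apply: has_chain_cat_l => s sA Ss hA2.
apply: (size_sorted_colouring inverts_trans Ss (colour_inverts A2f (chain_cat_support sA Ss hA2))).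
by move=> x _; rewrite /colour; case: ifP => //; case: ifP.
Qed.

Lemma has_chain3_cat : A2 = [:: f] -> has_chain 3 (A1 ++ A2) -> has_chain 3 A1.
Proof.
move=> A2E; apply: has_chain_cat_l => s sA Ss hA2.
have A2f : {in A2 &, forall b b', b != f -> b' != f -> ~~ inverts b b'}.
  by move=> b b'; rewrite A2E inE => /eqP->; rewrite eqxx.
have sS := chain_cat_support sA Ss hA2.
apply: (size_sorted_colouring inverts_trans Ss (colour_inverts A2f sS)) => x /sS.
by rewrite A2E !inE /colour; case: eqP => // _; case: eqP => //= _; case: eqP.
Qed.

End ChainCat.

Definition arcs (x : nat) (w : seq nat) (y : nat) : seq (nat * nat) := zip (x :: w) (rcons w y).

Lemma arcs_cons x m r y : arcs x (m :: r) y = (x, m) :: arcs m r y.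
Proof. by []. Qed.

Lemma arcs_cat x L m R y : arcs x (L ++ m :: R) y = arcs x L m ++ arcs m R y.
Proof. by elim: L x => //= l L IH x; rewrite arcs_cons IH. Qed.

Lemma mem_zip_fst (S T : eqType) (s : seq S) (t : seq T) b : b \in zip s t -> b.1 \in s.
Proof.
elim: s t => [|x s IH] [|y t] //=; rewrite !inE => /orP[/eqP-> | /IH ->]; rewrite ?eqxx ?orbT //.
Qed.

Lemma mem_zip_snd (S T : eqType) (s : seq S) (t : seq T) b : b \in zip s t -> b.2 \in t.
Proof.
elim: s t => [|x s IH] [|y t] //=; rewrite !inE => /orP[/eqP-> | /IH ->]; rewrite ?eqxx ?orbT //.
Qed.

Lemma mem_arcs x w y u : u \in arcs x w y -> u.1 \in x :: w /\ u.2 \in rcons w y.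
Proof. by move=> uA; split; [apply: mem_zip_fst uA | apply: mem_zip_snd uA]. Qed.

Lemma arcs_head x w y : (x, head y w) \in arcs x w y.
Proof. by case: w => [|m w]; rewrite /arcs /= mem_head. Qed.

Lemma arcs_last x w y : (last x w, y) \in arcs x w y.
Proof. by elim: w x => [|m w IH] x; rewrite ?mem_head // arcs_cons inE IH orbT. Qed.

Lemma arcs_shape x L z u : u \in arcs x L z ->
  [\/ u = (x, head z L), u = (last x L, z) | u.1 \in L /\ u.2 \in L].
Proof.
elim: L x => [|l L IH] x; first by rewrite inE => /eqP ->; constructor 1.
rewrite arcs_cons inE => /orP[/eqP -> | /IH[-> | -> | [u1 u2]]] /=; first by constructor 1.
- by case: L {IH} => [|l' L] /=; [constructor 2 | constructor 3; rewrite !inE !eqxx orbT].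
- by constructor 2.
- by constructor 3; rewrite !inE u1 u2 !orbT.
Qed.

Lemma arcs_down m D y : arcs m D y = rcons (zip (m :: D) D) (last m D, y).
Proof. by elim: D m => [|d D IH] m //; rewrite arcs_cons IH. Qed.

Lemma zip_behead_gap s u v z : sorted gtn s -> (u, v) \in zip s (behead s) -> z \in s ->
  v < u /\ ~~ (v < z < u).
Proof.
elim: s z => [|p [|q s] IH] z //= /andP[/= pq Ss].
have /allP qs : all (gtn q) s := order_path_min gtn_trans Ss.
rewrite inE => /orP[/eqP[-> ->] | bs].
  by rewrite !inE => /or3P[/eqP-> | /eqP-> | /qs /=]; rewrite ?ltnn ?andbF //; split=> //; lia.
have uq : u <= q by move: (mem_zip_fst bs); rewrite inE => /orP[/eqP /= -> | /qs /= /ltnW].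
have [vu _] := IH q Ss bs (mem_head q s).
rewrite inE => /orP[/eqP-> | zs]; last exact: IH.
by split=> //; apply/negP => /andP[_]; lia.
Qed.

Lemma arcs_down_noninv m D y : sorted gtn (m :: D) ->
  {in arcs m D y &, forall b b', b != (last m D, y) -> b' != (last m D, y) -> ~~ inverts b b'}.
Proof.
move=> S [u v] [u' v']; rewrite arcs_down !mem_rcons !inE => /orP[-> // | bZ] /orP[-> // | b'Z] _ _.
have [vu _] := zip_behead_gap S bZ (mem_head m D).
have [_ gap] := zip_behead_gap S b'Z (mem_zip_fst bZ).
by apply/negP => /andP[/= uu' v'v]; move: gap; rewrite /= uu' andbT; apply/negP/negPn; lia.
Qed.

Section TopArc.

Variables (x m y : nat) (r : seq nat).
Hypotheses (rm : all (fun e => e < m) r) (mx : m < x) (my : m < y).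

Lemma arcs_top_first v : v \in arcs m r y -> ~~ inverts (x, m) v.
Proof.
case: v => v1 v2 /mem_arcs[/= + _]; rewrite inE /inverts /= negb_and -leqNgt.
by case/orP=> [/eqP-> | /(allP rm) /=]; lia.
Qed.

Lemma arcs_top_second u v : u \in arcs m r y -> v \in arcs m r y ->
  inverts v (x, m) -> ~~ inverts u v.
Proof.
have snd_le c : c \in rcons r y -> c <= y /\ (m < c -> c = y).
  by rewrite mem_rcons inE => /orP[/eqP-> | /(allP rm)] //; lia.
case: u v => u1 u2 [v1 v2] /mem_arcs[_ /= /snd_le[u2y _]] /mem_arcs[_ /= /snd_le[_ v2y]].
by rewrite /inverts /= => /andP[_ /v2y ->]; apply/negP => /andP[_]; lia.
Qed.

Lemma has_chain_arcs_top k : 2 < k -> has_chain k (arcs x (m :: r) y) -> has_chain k (arcs m r y).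
Proof.
by rewrite arcs_cons; apply: has_chain_cons_top; [apply: arcs_top_first | apply: arcs_top_second].
Qed.

End TopArc.

Lemma arcs_apart x l m D y b : all (fun e => e < b) l -> all (fun e => b <= e) D ->
  b <= m -> b <= y -> forall u, u \in arcs x l m ->
  [\/ u = (x, head m l), u = (last x l, m)
    | forall c, c \in arcs m D y -> ~~ inverts u c && ~~ inverts c u].
Proof.
move=> /allP lb /allP bD bm b_y u /arcs_shape[-> | -> | [u1 u2]];
  [by constructor 1 | by constructor 2 | constructor 3].
move=> [c1 c2] /mem_arcs[/= c1D c2D].
have b_c1 : b <= c1 by move: c1D; rewrite inE => /orP[/eqP-> | /bD].
have b_c2 : b <= c2 by move: c2D; rewrite mem_rcons inE => /orP[/eqP-> | /bD].
by have := lb _ u1; have := lb _ u2; rewrite /inverts /=; lia.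
Qed.

Lemma sumn_map_eq0 (T : eqType) (f : T -> nat) s : {in s, forall j, f j = 0} -> sumn (map f s) = 0.
Proof. by move=> f0; apply/eqP/natnseq0P/all_pred1P/allP => _ /mapP[j /f0 -> ->]. Qed.

Section ChainsOfEnumeration.

Variable a : nat.

Lemma av_below k w : w \in av a k -> all (fun e => e < a + k) w.
Proof. by move=> wG; apply/allP => e /(mem_av wG); lia. Qed.

Lemma av_nil j l : l \in av a j -> (l == [::]) = (j == 0).
Proof. by move=> /size_av_seq <-; case: l. Qed.

Lemma last_down_ge b c d : b <= d -> b <= last d (down b c).
Proof.
by move=> bd; have := mem_last d (down b c); rewrite inE mem_down => /orP[/eqP-> | /andP[]].
Qed.

Section Cat.

Variables (k j : nat) (l : seq nat) (x y : nat).
Hypotheses (jk : 0 < j <= k) (lG : l \in av a j) (xk : a + k < x) (yk : a + k < y).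

Let D := down (a + j) (k - j).

Lemma av_cat_apart u : u \in arcs x l (a + k) ->
  [\/ u = (x, head (a + k) l), u = (last x l, a + k)
    | forall c, c \in arcs (a + k) D y -> ~~ inverts u c && ~~ inverts c u].
Proof.
apply: (arcs_apart (b := a + j)) => //; try lia.
  by apply/allP => e /(mem_av lG); lia.
by apply/allP => e; rewrite mem_down; lia.
Qed.

Lemma av_cat_noninv : {in arcs (a + k) D y &, forall b b',
  b != (last (a + k) D, y) -> b' != (last (a + k) D, y) -> ~~ inverts b b'}.
Proof.
by apply: arcs_down_noninv; rewrite (down_cons (d := a + k)) ?sorted_down //; lia.
Qed.

Let l_below e : e \in l -> e < a + j.
Proof. by move=> /(mem_av lG); lia. Qed.

Let l_nil : l != [::].
Proof. by rewrite (av_nil lG); lia. Qed.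

Let l_last : last x l \in l.
Proof. by case: l l_nil => // e l' _; apply: mem_last. Qed.

Let l_head : head (a + k) l \in l.
Proof. by case: l l_nil => // e l' _; apply: mem_head. Qed.

Lemma av_cat_ends_noninv : ~~ inverts (last x l, a + k) (last (a + k) D, y) &&
  ~~ inverts (last (a + k) D, y) (last x l, a + k).
Proof.
have := l_below l_last; have : a + j <= last (a + k) D by apply: last_down_ge; lia.
by rewrite /inverts /=; lia.
Qed.

Lemma av_cat_chain4 :
  has_chain 4 (arcs x (l ++ a + k :: D) y) -> has_chain 4 (arcs x l (a + k)).
Proof.
by rewrite arcs_cat; apply: (has_chain4_cat av_cat_apart av_cat_ends_noninv av_cat_noninv).
Qed.

Lemma av_snoc_chain3 : j = k ->
  has_chain 3 (arcs x (l ++ a + k :: D) y) -> has_chain 3 (arcs x l (a + k)).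
Proof.
move=> jk'; have DE : D = [::] by rewrite /D jk' subnn.
by rewrite arcs_cat; apply: (has_chain3_cat av_cat_apart av_cat_ends_noninv); rewrite DE.
Qed.

Lemma av_cat_chain3 : j < k -> has_chain 3 (arcs x (l ++ a + k :: D) y).
Proof.
move=> jk'; have hD : head y D \in D.
  have : size D = k - j by rewrite size_rev size_iota.
  by case: D => [|d D'] /=; [lia | rewrite mem_head].
have := hD; rewrite mem_down => hDb.
have := l_below l_head; have := l_below l_last => lastb headb.
exists [:: (last x l, a + k); (a + k, head y D); (x, head (a + k) l)]; split=> //.
  by move=> u; rewrite arcs_cat mem_cat !inE => /or3P[] /eqP->; rewrite ?arcs_last ?arcs_head ?orbT.
by rewrite /= /inverts /=; apply/and3P; split=> //; apply/andP; split; lia.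
Qed.

End Cat.

Lemma av_no_chain4 k w : w \in av a k ->
  forall x y, a + k <= x -> a + k <= y -> ~ has_chain 4 (arcs x w y).
Proof.
move: k w; apply: av_ind => [x y _ _ /has_chain_size // | k r rG IH x y xk yk |
  k j l jk lG IH x y xk yk].
  have mx : a + k < x by lia.
  have my : a + k < y by lia.
  by move=> /(has_chain_arcs_top (av_below rG) mx my (isT : 2 < 4)); apply: IH; lia.
have xk' : a + k < x by lia.
have yk' : a + k < y by lia.
by move=> /(av_cat_chain4 jk lG xk' yk'); apply: IH; lia.
Qed.

Lemma count_av_no_chain3 k x y : a + k <= x -> a + k <= y ->
  count (fun w => ~~ has_chain3b (arcs x w y)) (av a k) = 2 ^ k.-1.
Proof.
elim/ltn_ind: k x y => [[|k]] IH x y xk yk; first by rewrite /= /has_chain3b /= /inverts /= ltnn.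
have xk' : a + k < x by lia.
have yk' : a + k < y by lia.
rewrite avS count_cat count_map.
rewrite (@eq_in_count _ _ (fun r => ~~ has_chain3b (arcs (a + k) r y))); last first.
  move=> r rG /=; congr negb; apply/has_chain3P/has_chain3P.
    exact: (has_chain_arcs_top (av_below rG) xk' yk').
  by apply: has_chain_subset => u; rewrite arcs_cons inE => ->; rewrite orbT.
rewrite IH // ?leqnn //; last lia.
rewrite count_flatten -map_comp; case: k => [|k] in IH xk yk xk' yk' *; first by [].
(* Of the second family, only the words ending with the largest letter survive. *)
rewrite iotaSr map_rcons sumn_rcons add1n /= subnn sumn_map_eq0 ?add0n; last first.
  move=> j; rewrite mem_iota => jk /=; apply/eqP; rewrite -leqn0 leqNgt -has_count.
  apply/hasPn => _ /mapP[l lG ->]; apply/negPn/has_chain3P.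
  apply: av_cat_chain3 => //; lia.
rewrite count_map (@eq_in_count _ _ (fun l => ~~ has_chain3b (arcs x l (a + k.+1)))); last first.
  move=> l lG /=; congr negb; apply/has_chain3P/has_chain3P.
    have kk : 0 < k.+1 <= k.+1 by rewrite leqnn.
    by have := av_snoc_chain3 kk lG xk' yk' (erefl _); rewrite subnn.
  by apply: has_chain_subset => u; rewrite arcs_cat mem_cat => ->.
by rewrite IH // ?expnS ?mul2n ?addnn //; lia.
Qed.

End ChainsOfEnumeration.

(** * Cyclic permutations and their cycle words *)

Lemma subseq_map_inv (T1 T2 : eqType) (f : T1 -> T2) t s :
  subseq t (map f s) -> exists2 t', subseq t' s & t = map f t'.
Proof. by move=> /subseqP[m sm ->]; exists (mask m s); rewrite ?mask_subseq ?map_mask. Qed.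

Lemma sorted_subset_subseq (T : eqType) (r : rel T) s t : transitive r -> irreflexive r ->
  sorted r s -> sorted r t -> {subset s <= t} -> subseq s t.
Proof.
move=> rt ri Ss St st; have -> : s = filter (mem s) t.
  apply: (irr_sorted_eq rt ri Ss (sorted_filter rt _ St)) => x.
  by rewrite mem_filter; apply/idP/andP => [xs | [] //]; split; [| apply: st].
exact: filter_subseq.
Qed.

Lemma has_chain_graph (T : eqType) (key f : T -> nat) d k : sorted ltn (map key d) ->
  has_chain k [seq (key i, f i) | i <- d] <->
  exists t, [/\ subseq t (map f d), size t = k & sorted gtn t].
Proof.
set pt := fun i => (key i, f i) => Sd.
have fst_trans : transitive (relpre (@fst nat nat) ltn) by move=> y x z; apply: ltn_trans.
split=> [[s [sk sA Ss]] | [t [St tk Dt]]].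
  have sS : subseq s (map pt d).
    apply: (sorted_subset_subseq fst_trans) sA; first by move=> ?; apply: ltnn.
      by move: Ss; rewrite sorted_inverts -sorted_map => /andP[].
    by rewrite sorted_map; move: Sd; rewrite sorted_map.
  exists (unzip2 s); split; last by move: Ss; rewrite sorted_inverts => /andP[].
    by have := map_subseq snd sS; rewrite -map_comp.
  by rewrite size_map.
have [d' Sd' tE] := subseq_map_inv St; subst t.
exists (map pt d'); split; first by rewrite size_map -tk size_map.
  by apply/mem_subseq/map_subseq.
rewrite sorted_inverts /unzip1 /unzip2 -!map_comp Dt andbT.
have -> : map (fst \o pt) d' = map key d' by [].
exact: (subseq_sorted (leT := ltn) ltn_trans (map_subseq key Sd') Sd).
Qed.

Lemma succ_enum_ord n : [seq (z : nat).+1 | z : 'I_n <- enum 'I_n] = iota 1 n.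
Proof. by rewrite (map_comp succn val) val_enum_ord -(iotaDl 1). Qed.

Definition graph n (p : 'S_n) : seq (nat * nat) :=
  [seq ((z : nat).+1, (p z : nat).+1) | z : 'I_n <- enum 'I_n].

Lemma avoids_delta_graph n (p : 'S_n) k :
  avoids (one_line p) (delta k) <-> ~ has_chain k (graph p).
Proof.
rewrite avoids_delta.
rewrite (has_chain_graph (key := fun z : 'I_n => (z : nat).+1) (fun z => (p z : nat).+1) k).
  by [].
by rewrite succ_enum_ord iota_ltn_sorted.
Qed.

Lemma traject_map (T : Type) (f : T -> T) x k : traject f (f x) k = map f (traject f x k).
Proof. by elim: k x => //= k IH x; rewrite IH. Qed.

Lemma traject_iter (T : Type) (f : T -> T) x k :
  traject f x k = [seq iter j f x | j <- iota 0 k].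
Proof.
apply: (eq_from_nth (x0 := x)); first by rewrite size_map size_iota size_traject.
by move=> i; rewrite size_traject => ik; rewrite nth_traject // (nth_map 0) ?size_iota // nth_iota.
Qed.

Lemma traject_rot (T : Type) (f : T -> T) x k s : s <= k -> iter k f x = x ->
  traject f (iter s f x) k = rot s (traject f x k).
Proof.
move=> sk fk; have E1 : traject f x k = traject f x s ++ traject f (iter s f x) (k - s).
  by rewrite -trajectD subnKC.
rewrite E1 -[s in rot s _](size_traject f x s) rot_size_cat -{1}(subnK sk) trajectD.
by rewrite -iterD subnK // fk.
Qed.

Definition cycle_word n (p : 'S_n.+1) : seq nat :=
  [seq (z : nat).+1 | z : 'I_n.+1 <- traject p (p ord_max) n].

Section CyclicPerm.

Variables (n : nat) (p : 'S_n.+1).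
Hypothesis cp : is_cyclic p.

Lemma cyclic_traject x :
  [/\ forall y, y \in traject p x n.+1, iter n.+1 p x = x & uniq (traject p x n.+1)].
Proof.
have [A HA] := cards1P cp.
have EA y : porbit p y = A by apply/set1P; rewrite -HA; apply: imset_f.
have all_x y : y \in porbit p x by rewrite EA -(EA y) porbit_id.
have card : #|porbit p x| = n.+1.
  have -> : porbit p x = [set: 'I_n.+1] by apply/setP => y; rewrite inE all_x.
  by rewrite cardsT card_ord.
split; first by move=> y; have := porbit_traject p x y; rewrite card all_x.
  by have := iter_porbit p x; rewrite card.
by have := uniq_traject_porbit p x; rewrite card.
Qed.

Let top : 'I_n.+1 := ord_max.

Lemma cycle_word_cons :
  n.+1 :: cycle_word p = [seq (z : nat).+1 | z : 'I_n.+1 <- traject p top n.+1].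
Proof. by []. Qed.

Lemma perm_cycle_word : perm_eq (cycle_word p) (iota 1 n).
Proof.
have [all_top _ Utop] := cyclic_traject top.
have P : perm_eq (traject p top n.+1) (enum 'I_n.+1).
  by apply: uniq_perm => // [|y]; rewrite ?enum_uniq ?mem_enum ?all_top.
rewrite -(perm_cons n.+1) cycle_word_cons (perm_trans (perm_map _ P)) //.
by rewrite succ_enum_ord iotaSr -cats1 perm_catC.
Qed.

Lemma cycle_form_rot : exists s, cycle_form p = rot s (n.+1 :: cycle_word p).
Proof.
have [all_top iter_top _] := cyclic_traject top.
have [s sn Es] := trajectP (all_top ord0).
exists s; rewrite cycle_word_cons -map_rot -traject_rot ?(ltnW sn) // -Es traject_iter -map_comp.
by apply: eq_map => j /=; rewrite permX.
Qed.

Lemma rotations_avoid_cycle_word :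
  rotations_avoid p pat1423 <-> ~ has231 (cycle_word p) /\ ~ has1423 (cycle_word p).
Proof.
have wn : all (fun x => x < n.+1) (cycle_word p).
  by apply/allP => x; rewrite (perm_mem perm_cycle_word) mem_iota; lia.
rewrite -(rot_cons_max_avoid1423 wn); have [s CF] := cycle_form_rot.
have sizeCF : size (cycle_form p) = n.+1 by rewrite size_map size_iota.
rewrite -(all_rot_rot (fun t => ~ has1423 t) _ s) -CF /rotations_avoid.
split=> [/forallP H i | H]; last by apply/forallP => i; apply/avoids_1423.
have [ilt | ige] := ltnP i n.+1; first by apply/avoids_1423; apply: (H (Ordinal ilt)).
rewrite rot_oversize ?sizeCF //; apply/avoids_1423.
by rewrite -(rot0 (cycle_form p)); apply: (H ord0).
Qed.

Lemma arcs_cycle_word : arcs n.+1 (cycle_word p) n.+1 =i graph p.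
Proof.
have [all_top iter_top _] := cyclic_traject top.
rewrite /arcs.
have -> : rcons (cycle_word p) n.+1 = [seq (p z : nat).+1 | z : 'I_n.+1 <- traject p top n.+1].
  rewrite (map_comp (fun z : 'I_n.+1 => (z : nat).+1) p) -traject_map trajectSr -iterSr iter_top.
  by rewrite map_rcons.
rewrite cycle_word_cons zip_map => u.
by apply/mapP/mapP => -[z _ ->]; exists z; rewrite ?mem_enum.
Qed.

End CyclicPerm.

Lemma cycle_word_inj n (p q : 'S_n.+1) :
  is_cyclic p -> is_cyclic q -> cycle_word p = cycle_word q -> p = q.
Proof.
move=> cp cq E.
have [allp iterp _] := cyclic_traject cp ord_max; have [_ iterq _] := cyclic_traject cq ord_max.
have ET : traject p ord_max n.+1 = traject q ord_max n.+1.
  apply: (inj_map (f := fun z : 'I_n.+1 => (z : nat).+1)); first by move=> x y [] /val_inj.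
  by rewrite -!cycle_word_cons E.
have same_iter j : j <= n.+1 -> iter j p ord_max = iter j q ord_max.
  rewrite leq_eqVlt => /orP[/eqP-> | jn]; first by rewrite iterp iterq.
  by rewrite -(nth_traject _ jn) ET nth_traject.
apply/permP => z; have [i ilt ->] := trajectP (allp z).
by rewrite -iterS same_iter // (same_iter i) ?iterS // ltnW.
Qed.

Section CycleOfWord.

Variables (n : nat) (w : seq nat).
Hypothesis Pw : perm_eq w (iota 1 n).

Let c := n.+1 :: w.

Let Pc : perm_eq c (iota 1 n.+1).
Proof. by rewrite iotaSr -cats1 perm_sym perm_catC /= add1n perm_cons perm_sym. Qed.

Let Uc : uniq c.
Proof. by rewrite (perm_uniq Pc) iota_uniq. Qed.

Let size_w : size w = n.
Proof. by rewrite (perm_size Pw) size_iota. Qed.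

Let next_succ (z : 'I_n.+1) : 0 < next c (z : nat).+1 <= n.+1.
Proof.
have zc : (z : nat).+1 \in c by rewrite (perm_mem Pc) mem_iota; have := ltn_ord z; lia.
by move: zc; rewrite -mem_next (perm_mem Pc) mem_iota; lia.
Qed.

Let f (z : 'I_n.+1) : 'I_n.+1 := inord (next c (z : nat).+1).-1.

Let f_succ z : (f z : nat).+1 = next c (z : nat).+1.
Proof. by have /andP[pos le] := next_succ z; rewrite /f inordK prednK. Qed.

Let f_inj : injective f.
Proof.
move=> z1 z2 E; apply/val_inj/succn_inj/(can_inj (prev_next Uc)).
by rewrite -!f_succ E.
Qed.

Let p := perm f_inj.

Let iter_p i : i < n.+1 -> (iter i p ord_max : nat).+1 = nth 0 c i.
Proof.
elim: i => [|i IH] ilt //=.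
have ic : i < size c by rewrite /= size_w; lia.
rewrite permE f_succ IH 1?ltnW // next_nth mem_nth // index_uniq //=.
by rewrite (set_nth_default 0) // size_w; lia.
Qed.

Lemma cycle_word_surj : exists2 p : 'S_n.+1, is_cyclic p & cycle_word p = w.
Proof.
have iter_top : iter n.+1 p ord_max = ord_max.
  apply/val_inj/succn_inj; rewrite /= permE f_succ iter_p // next_nth.
  by rewrite mem_nth ?index_uniq //= ?size_w // nth_default ?size_w.
have TR : [seq (z : nat).+1 | z : 'I_n.+1 <- traject p ord_max n.+1] = c.
  apply: (eq_from_nth (x0 := 0)); first by rewrite size_map size_traject /= size_w.
  move=> i; rewrite size_map size_traject => ilt.
  by rewrite (nth_map ord_max) ?size_traject // nth_traject // iter_p.
exists p; last by move: TR; rewrite -cycle_word_cons => -[].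
have all_top z : z \in porbit p ord_max.
  have : (z : nat).+1 \in c by rewrite (perm_mem Pc) mem_iota; have := ltn_ord z; lia.
  rewrite -TR => /mapP[y /trajectP[i _ ->]] /succn_inj/val_inj ->.
  by rewrite -permX mem_porbit.
apply/cards1P; exists (porbit p ord_max); apply/setP => A; rewrite inE.
apply/imsetP/eqP => [[z _ ->] | ->]; last by exists ord_max.
by apply/eqP; rewrite eq_porbit_mem.
Qed.

End CycleOfWord.

Lemma rotations_avoid_av n (p : 'S_n.+1) : is_cyclic p ->
  rotations_avoid p pat1423 = (cycle_word p \in av 1 n).
Proof.
move=> cp; apply/idP/idP => [/(rotations_avoid_cycle_word cp)[N1 N2] | /av_avoid].
  exact: av_complete (perm_cycle_word cp) N1 N2.
by move/(rotations_avoid_cycle_word cp).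
Qed.

Lemma a_circ_count n k (Q : pred (seq nat)) :
  (forall p : 'S_n.+1, is_cyclic p -> cycle_word p \in av 1 n ->
     avoids (one_line p) (delta k) = Q (cycle_word p)) ->
  a_circ n.+1 k = count Q (av 1 n).
Proof.
move=> HQ; rewrite /a_circ cardE -(size_map (@cycle_word n)) -size_filter.
set S := [set p : 'S_n.+1 | _].
have memS p : (p \in S) = [&& is_cyclic p, cycle_word p \in av 1 n & Q (cycle_word p)].
  rewrite inE; case: (boolP (is_cyclic p)) => //= cp.
  by rewrite rotations_avoid_av //; case: (boolP (_ \in _)) => wG; rewrite ?andbF ?andbT // HQ.
apply: perm_size; apply: uniq_perm.
- rewrite map_inj_in_uniq ?enum_uniq // => p q; rewrite !mem_enum !memS.
  by move=> /and3P[cp _ _] /and3P[cq _ _]; apply: cycle_word_inj.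
- by rewrite filter_uniq // av_uniq.
move=> w; rewrite mem_filter; apply/mapP/andP => [[p] | [Qw wG]].
  by rewrite mem_enum memS => /and3P[_ PG Qp] ->.
have [p cp Ep] := cycle_word_surj (perm_av wG).
by exists p => //; rewrite mem_enum memS cp Ep wG Qw.
Qed.

Lemma avoids_delta_arcs n (p : 'S_n.+1) k : is_cyclic p ->
  avoids (one_line p) (delta k) <-> ~ has_chain k (arcs n.+1 (cycle_word p) n.+1).
Proof. by move=> cp; rewrite avoids_delta_graph (eq_has_chain _ (arcs_cycle_word cp)). Qed.

Lemma a_circ_delta3 n : a_circ n.+1 3 = 2 ^ n.-1.
Proof.
rewrite (@a_circ_count n 3 (fun w => ~~ has_chain3b (arcs n.+1 w n.+1))).
  by rewrite count_av_no_chain3 // add1n.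
move=> p cp _; apply/idP/idP => [/(avoids_delta_arcs _ cp) N | /has_chain3P N].
  by apply/has_chain3P.
exact/(avoids_delta_arcs _ cp).
Qed.

Lemma a_circ_delta_ge4 n k : 0 < n -> 4 <= k -> a_circ n.+1 k = fib (2 * n - 1).
Proof.
move=> n0 k4; rewrite (@a_circ_count n k predT) ?count_predT ?size_av //.
move=> p cp wG /=; apply/(avoids_delta_arcs _ cp) => /(has_chain_leq k4).
by apply: av_no_chain4 wG _ _ _ _; rewrite add1n.
Qed.

Theorem corollary3p2 :
  (forall n : nat, 3 <= n -> a_circ n 3 = 2 ^ (n - 2)) /\
  (forall n k : nat, 3 <= n -> 4 <= k -> a_circ n k = fib (2 * n - 3)).
Proof.
split=> [[|n] // _ | [|n] // k n3 k4]; first by rewrite a_circ_delta3 subSS subn1.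
rewrite a_circ_delta_ge4 //; last lia.
by have -> : 2 * n.+1 - 3 = 2 * n - 1 by lia.
Qed.
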